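(* Consider $N$ identical cells. For cell $i\in\{0,\dots,N-1\}$ let $x_i(t)\in\mathbb{R}^n$ be its state, $u_i\in\mathbb{R}$ a constant-in-time input, $y_i(t)\in\mathbb{R}$ its readout, and $w_i(t),v_i(t)\in\mathbb{R}^q$ its coupling output and coupling input, with dynamics $$\dot x_i=f(x_i,v_i,u_i),\qquad w_i=g(x_i),\qquad y_i=h(x_i),\qquad v=(M\otimes I_q)w,$$ where $f,g,h$ are continuously differentiable, $M\in\mathbb{R}^{N\times N}$, $\otimes$ is the Kronecker product, and $x,u,y,w,v$ denote the vertical concatenations over cells (e.g. $w=[w_0^T\cdots w_{N-1}^T]^T$). Assume: (1) $M\mathbf{1}_N=\mu\mathbf{1}_N$ for some $\mu\in\mathbb{R}$ (where $\mathbf{1}_N$ is the all-ones vector), and $M$ is diagonalizable as $M=T\Lambda T^{-1}$ with $\Lambda=\mathrm{diag}(\lambda_0(M),\dots,\lambda_{N-1}(M))$; (2) for a given $\bar u\in\mathbb{R}$ there is $\bar x^*\in\mathbb{R}^n$ with $f(\bar x^*,\mu g(\bar x^* ),\bar u)=0$; set $\underline{x}^*=\mathbf{1}_N\otimes\bar x^*$, $\underline{u}=\bar u\mathbf{1}_N$ and $\bar v^*=\mu g(\bar x^* )$ (so $(\underline{x}^*,\underline{u})$ is a spatially homogeneous steady state); (3) this homogeneous steady state is asymptotically stable, i.e. the matrix $(I_N\otimes A)+(I_N\otimes B_v)(M\otimes I_q)(I_N\otimes G)$ below has all eigenvalues with negative real part. Let $A=\frac{\partial f}{\partial x_i}$,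 $B_v=\frac{\partial f}{\partial v_i}$, $B_u=\frac{\partial f}{\partial u_i}$ evaluated at $(\bar x^*,\bar v^*,\bar u)$, and $C=\frac{dh}{dx_i}(\bar x^* )$, $G=\frac{dg}{dx_i}(\bar x^* )$, and consider the linearized system $$\dot{\tilde x}=\big[(I_N\otimes A)+(I_N\otimes B_v)(M\otimes I_q)(I_N\otimes G)\big]\tilde x+(I_N\otimes B_u)\tilde u,\qquad \tilde y=(I_N\otimes C)\tilde x .$$ For a constant-in-time, spatially varying input $u\in\mathbb{R}^N$, put $\tilde u=u-\underline{u}$ and $\hat u=T^{-1}\tilde u$. Then the steady-state perturbed readout $\tilde y^*$ of the linearized system satisfies $\hat y^*:=T^{-1}\tilde y^*=S\hat u$, where $S$ is the diagonal $N\times N$ matrix with entries $$[S]_{kk}=-C\big(A+\lambda_k(M)B_vG\big)^{-1}B_u,\qquad k=0,\dots,N-1.$$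
   Context: The columns of $T$ are called spatial modes and the numbers $[S]_{kk}$ filter coefficients. $I_m$ denotes the $m\times m$ identity matrix. *)

From HB Require Import structures.
From mathcomp Require Import all_boot all_order all_algebra.
From mathcomp Require Import all_classical all_reals all_analysis.
From mathcomp Require Import complex mxtens.
Set Implicit Arguments. Unset Strict Implicit. Unset Printing Implicit Defensive.
Import Order.TTheory GRing.Theory Num.Theory.
Import numFieldNormedType.Exports.
Local Open Scope ring_scope.

Definition jacobianC (R : realType) (m n : nat)
  (F : 'cV[R]_m -> 'cV[R]_n) (x : 'cV[R]_m) : 'M[R]_(n, m) :=
  \matrix_(i < n, j < m) ('D_(delta_mx j ord0) F x) i ord0.

Definition gradrow (R : realType) (m : nat)
  (F : 'cV[R]_m -> R) (x : 'cV[R]_m) : 'M[R]_(1, m) :=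
  \row_(j < m) 'D_(delta_mx j ord0) F x.

Definition C1fun (R : realType) (U V : normedModType R) (F : U -> V) : Prop :=
  (forall p, differentiable F p) /\ (forall d : U, continuous (fun p => 'D_d F p)).

Definition cmx (R : realType) (m n : nat) (A : 'M[R]_(m, n)) : 'M[R[i]]_(m, n) :=
  map_mx (real_complex R) A.

Definition hurwitz (R : realType) (n : nat) (J : 'M[R]_n) : Prop :=
  forall l : R[i], eigenvalue (cmx J) l -> complex.Re l < 0.

Definition kronI_col (R : realType) (N n : nat) (B : 'M[R]_(n, 1)) : 'M[R]_(N * n, N) :=
  castmx (erefl (N * n)%N, muln1 N) ((1%:M : 'M[R]_N) *t B).

Definition kronI_row (R : realType) (N n : nat) (C : 'M[R]_(1, n)) : 'M[R]_(N, N * n) :=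
  castmx (muln1 N, erefl (N * n)%N) ((1%:M : 'M[R]_N) *t C).

From HB Require Import structures.
From mathcomp Require Import all_boot all_order all_algebra.
From mathcomp Require Import all_classical all_reals all_analysis.
From mathcomp Require Import complex mxtens.
Import Order.TTheory GRing.Theory Num.Theory.
Import numFieldNormedType.Exports.
Set Implicit Arguments. Unset Strict Implicit. Unset Printing Implicit Defensive.
Local Open Scope ring_scope.

(* The coupled Jacobian is [J = (I (x) A) + (M (x) Bv G)].  If [r] is a left
   eigenvector of [M] for [lam], then [(r (x) w) J = r (x) w (A + lam Bv G)], so
   the system splits into the spatial modes given by the rows of [T^-1], each
   governed by the single-cell matrix [A + lam_k Bv G].  Hurwitz stability of [J]
   makes all of these invertible, and projecting the steady-state equation onto
   the [k]-th mode with the covector [C (A + lam_k Bv G)^-1] yields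
   [y_k = S_kk u_k].  The smoothness and equilibrium hypotheses only serve to
   define the linearization; the argument is pure linear algebra. *)

Section TensorRows.
Variable R : comPzRingType.

Lemma tensmxDr m n p q (A : 'M[R]_(m, n)) (B C : 'M[R]_(p, q)) :
  A *t (B + C) = A *t B + A *t C.
Proof. by apply/matrixP => i j; rewrite !mxE mulrDr. Qed.

Lemma tensmxZl m n p q c (A : 'M[R]_(m, n)) (B : 'M[R]_(p, q)) :
  (c *: A) *t B = c *: (A *t B).
Proof. by apply/matrixP => i j; rewrite !mxE mulrA. Qed.

Lemma tensmxZr m n p q c (A : 'M[R]_(m, n)) (B : 'M[R]_(p, q)) :
  A *t (c *: B) = c *: (A *t B).
Proof. by apply/matrixP => i j; rewrite !mxE mulrCA. Qed.

Lemma mul_tensmx_kronI_col N n (r : 'rV[R]_N) (w : 'rV[R]_n) (B : 'cV[R]_n) :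
  (r *t w) *m castmx (erefl (N * n)%N, muln1 N) (1%:M *t B) = (w *m B) 0 0 *: r.
Proof.
have := castmx_mul (erefl (1 * 1)%N) (muln1 N) (r *t w) (1%:M *t B).
rewrite castmx_id => <-; rewrite tensmx_mul mulmx1 [w *m B]mx11_scalar.
by rewrite tens_mx_scalar castmx_comp castmx_id -mx11_scalar.
Qed.

Lemma mul_kronI_row N n (r : 'rV[R]_N) (C : 'rV[R]_n) :
  r *m castmx (muln1 N, erefl (N * n)%N) (1%:M *t C) = r *t C.
Proof.
rewrite mulmx_cast (castmx_id (erefl _, erefl _) (1%:M *t C)).
have -> : castmx (erefl 1%N, esym (muln1 N)) r = castmx (muln1 1, erefl) (r *t 1%:M).
  by rewrite tens_mx_scalar scale1r castmx_comp; congr castmx; congr pair;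
    apply: eq_irrelevance.
have := castmx_mul (muln1 1) (erefl (N * n)%N) (r *t 1%:M) (1%:M *t C).
by rewrite castmx_id => <-; rewrite tensmx_mul mulmx1 mul1mx castmx_id.
Qed.

Lemma mul_tensmx_kron_sum N n (M : 'M[R]_N) (A K : 'M[R]_n) (r : 'rV[R]_N) lam
    (w : 'rV[R]_n) :
  r *m M = lam *: r ->
  (r *t w) *m (1%:M *t A + M *t K) = r *t (w *m (A + lam *: K)).
Proof.
move=> rM; rewrite mulmxDr !tensmx_mul mulmx1 rM tensmxZl -tensmxZr -tensmxDr.
by rewrite mulmxDr scalemxAr.
Qed.

End TensorRows.

Lemma mx_neq0P (R : nmodType) m n (A : 'M[R]_(m, n)) :
  reflect (exists i j, A i j != 0) (A != 0).
Proof.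
apply: (iffP idP) => [nzA | [i [j]]]; last by apply: contraNneq => ->; rewrite mxE.
have /existsP[i /existsP[j Aij]] : [exists i, exists j, A i j != 0].
  apply: contraNT nzA => /existsPn A0; apply/eqP/matrixP => i j.
  by move/existsPn: (A0 i) => /(_ j); rewrite negbK mxE => /eqP.
by exists i, j.
Qed.

Lemma tensmx_eq0 (R : idomainType) m n p q (A : 'M[R]_(m, n)) (B : 'M[R]_(p, q)) :
  (A *t B == 0) = (A == 0) || (B == 0).
Proof.
apply/idP/idP; last by case/orP => /eqP->; rewrite ?tens0mx ?tensmx0.
apply: contraLR; rewrite negb_or => /andP[/mx_neq0P[i [j Aij]] /mx_neq0P[k [l Bkl]]].
by apply/mx_neq0P; exists (mxtens_index (i, k)), (mxtens_index (j, l));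
  rewrite tensmxE mulf_neq0.
Qed.

Section Eigen.
Variable F : fieldType.

Lemma eigenvalue0 n (A : 'M[F]_n) : eigenvalue A 0 = (A \notin unitmx).
Proof. by rewrite /eigenvalue /eigenspace raddf0 subr0 kermx_eq0 row_free_unit. Qed.

Lemma eigenvalue_kron_sum N n (M : 'M[F]_N) (A K : 'M[F]_n) (r : 'rV[F]_N) lam a :
  r != 0 -> r *m M = lam *: r ->
  eigenvalue (A + lam *: K) a -> eigenvalue (1%:M *t A + M *t K) a.
Proof.
move=> nz_r rM /eigenvalueP[w wA nz_w]; apply/eigenvalueP; exists (r *t w).
  by rewrite (mul_tensmx_kron_sum A K w rM) wA tensmxZr.
by rewrite (tensmx_eq0 r w) negb_or nz_r.
Qed.

Lemma row_invmx_neq0 N (T : 'M[F]_N) k : T \in unitmx -> row k (invmx T) != 0.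
Proof.
move=> unitT; apply: contra_neq (oner_neq0 F) => Tk0.
have := row_mul k (invmx T) T; rewrite mulVmx // Tk0 mul0mx row1.
by move=> /rowP/(_ k); rewrite !mxE !eqxx.
Qed.

Lemma row_invmx_eigen N (M T : 'M[F]_N) (lam : 'rV[F]_N) k :
  T \in unitmx -> M = T *m diag_mx lam *m invmx T ->
  row k (invmx T) *m M = lam 0 k *: row k (invmx T).
Proof.
move=> unitT ->; rewrite -row_mul !mulmxA mulVmx // mul1mx mul_diag_mx.
by apply/rowP => j; rewrite !mxE.
Qed.

End Eigen.

Lemma steady_state_mode (F : fieldType) N n (M : 'M[F]_N) (A K : 'M[F]_n)
    (Bu : 'cV[F]_n) (C : 'rV[F]_n) (r : 'rV[F]_N) lam
    (x : 'cV[F]_(N * n)) (u : 'cV[F]_N) :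
  r *m M = lam *: r -> A + lam *: K \in unitmx ->
  (1%:M *t A + M *t K) *m x
    + castmx (erefl (N * n)%N, muln1 N) (1%:M *t Bu) *m u = 0 ->
  r *m (castmx (muln1 N, erefl (N * n)%N) (1%:M *t C) *m x)
    = - (C *m invmx (A + lam *: K) *m Bu) 0 0 *: (r *m u).
Proof.
move=> rM unitAK steady; set w := C *m invmx (A + lam *: K).
have := congr1 (mulmx (r *t w)) steady.
rewrite mulmx0 mulmxDr !mulmxA (mul_tensmx_kron_sum A K w rM) mulmxKV //.
rewrite mul_tensmx_kronI_col -scalemxAl => /eqP; rewrite addr_eq0 => /eqP.
by rewrite mul_kronI_row scaleNr.
Qed.

Lemma hurwitz_unitmx (R : realType) n (J : 'M[R]_n) : hurwitz J -> cmx J \in unitmx.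
Proof. by move=> hurJ; apply: contraT; rewrite -eigenvalue0 => /hurJ; rewrite ltxx. Qed.

Lemma cmx_kronI_col (R : realType) N n (B : 'cV[R]_n) :
  cmx (kronI_col N B) = castmx (erefl (N * n)%N, muln1 N) (1%:M *t cmx B).
Proof. by rewrite /cmx /kronI_col map_castmx map_mxT map_mx1. Qed.

Lemma cmx_kronI_row (R : realType) N n (C : 'rV[R]_n) :
  cmx (kronI_row N C) = castmx (muln1 N, erefl (N * n)%N) (1%:M *t cmx C).
Proof. by rewrite /cmx /kronI_row map_castmx map_mxT map_mx1. Qed.

Theorem proposition1 (R : realType) (N n q : nat)
  (f : 'cV[R]_n * 'cV[R]_q * R -> 'cV[R]_n)
  (g : 'cV[R]_n -> 'cV[R]_q) (h : 'cV[R]_n -> R)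
  (Hf : C1fun f) (Hg : C1fun g) (Hh : C1fun h)
  (M : 'M[R]_N) (mu : R)
  (HM1 : M *m (const_mx 1 : 'cV[R]_N) = mu *: (const_mx 1 : 'cV[R]_N))
  (T : 'M[R[i]]_N) (lam : 'rV[R[i]]_N)
  (HTinv : T \in unitmx)
  (HMdiag : cmx M = T *m diag_mx lam *m invmx T)
  (ubar : R) (xs : 'cV[R]_n)
  (Hss : f (xs, mu *: g xs, ubar) = 0) :
  let vs := mu *: g xs in
  let A := jacobianC (fun x : 'cV[R]_n => f (x, vs, ubar)) xs in
  let Bv := jacobianC (fun v : 'cV[R]_q => f (xs, v, ubar)) vs in
  let Bu : 'cV[R]_n := 'D_1 (fun u : R => f (xs, vs, u)) ubar in
  let C := gradrow h xs in
  let G := jacobianC g xs in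
  let J := (1%:M : 'M[R]_N) *t A
           + ((1%:M : 'M[R]_N) *t Bv) *m (M *t (1%:M : 'M[R]_q))
             *m ((1%:M : 'M[R]_N) *t G) in
  hurwitz J ->
  let S : 'rV[R[i]]_N :=
    \row_(k < N) (- (cmx C *m invmx (cmx A + lam ord0 k *: cmx (Bv *m G))
                        *m cmx Bu) ord0 ord0) in
  forall (u : 'cV[R]_N) (xt : 'cV[R]_(N * n)),
    let ut := u - ubar *: (const_mx 1 : 'cV[R]_N) in
    (* xt is the steady state of the linearized system driven by ut *)
    J *m xt + kronI_col N Bu *m ut = 0 ->
    let yt := kronI_row N C *m xt in
    invmx T *m cmx yt = diag_mx S *m (invmx T *m cmx ut).
Proof.
move=> vs A Bv Bu C G J hurJ S u xt ut steady yt.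
have cmxJ : cmx J = 1%:M *t cmx A + cmx M *t cmx (Bv *m G).
  by rewrite /J /cmx map_mxD !map_mxM !map_mxT !map_mx1 !tensmx_mul !mul1mx !mulmx1.
have steadyC : (1%:M *t cmx A + cmx M *t cmx (Bv *m G)) *m cmx xt
    + castmx (erefl (N * n)%N, muln1 N) (1%:M *t cmx Bu) *m cmx ut = 0.
  by rewrite -cmxJ -cmx_kronI_col /cmx -!map_mxM -map_mxD steady map_mx0.
have rowE k (X : 'cV[R[i]]_N) : (invmx T *m X) k 0 = (row k (invmx T) *m X) 0 0.
  by rewrite -row_mul [RHS]mxE.
apply/colP => k; rewrite rowE mul_diag_mx [RHS]mxE rowE.
have Tk_eigen := row_invmx_eigen k HTinv HMdiag.
have unitAK : cmx A + lam 0 k *: cmx (Bv *m G) \in unitmx.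
  apply: contraTT (hurwitz_unitmx hurJ); rewrite -!eigenvalue0 cmxJ.
  exact: eigenvalue_kron_sum (row_invmx_neq0 k HTinv) Tk_eigen.
have -> : cmx yt = cmx (kronI_row N C) *m cmx xt by exact: map_mxM.
rewrite cmx_kronI_row (steady_state_mode (cmx C) Tk_eigen unitAK steadyC).
by rewrite [LHS]mxE [S 0 k]mxE.
Qed.
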